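(* Let $\mu\in(0,1)$ and let $\beta:[0,\infty)\to(0,\infty)$ be positive, bounded, non-increasing with $\lim_{a\to\infty}a\beta(a)=\mu$, and suppose $\beta(a)=\frac{\mu}{1+a}+g(a)$ where $g\in L^1(0,\infty)$ and there exist $K_0,\alpha>0$ with $\int_a^\infty|g(s)|ds\le K_0(1+a)^{-\alpha}$ for all $a\ge0$. Let $B(a)=\int_0^a\beta$ and $W(\tau,b)=C(\tau)e^{-B(e^{\tau}b)}(1-b)^{\mu-1}$ on $[0,1)$ with $C(\tau)>0$ such that $\int_0^1W(\tau,b)db=1$. Then there exists $M>0$ such that for all $\tau\ge0$, $$\left|\mu\int_0^1\left[\frac{e^{\tau}b}{1+e^{\tau}b}-1\right]W(\tau,b)\,db\right|\le Me^{-(1-\mu)\tau}.$$ *)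

From HB Require Import structures.
From mathcomp Require Import all_boot all_order all_algebra.
From mathcomp Require Import all_classical all_reals all_analysis.
Set Implicit Arguments. Unset Strict Implicit. Unset Printing Implicit Defensive.
Import Order.TTheory GRing.Theory Num.Theory.
Import numFieldNormedType.Exports.
Local Open Scope classical_set_scope.
Local Open Scope ring_scope.

Definition Bfun {R : realType} (beta : R -> R) (a : R) : R :=
  Rintegral lebesgue_measure `[0, a] beta.

Definition Wfun {R : realType} (mu : R) (beta : R -> R) (C : R -> R)
    (tau b : R) : R :=
  C tau * expR (- Bfun beta (expR tau * b)) * (1 - b) `^ (mu - 1).

From HB Require Import structures.
From mathcomp Require Import all_boot all_order all_algebra.
From mathcomp Require Import all_classical all_reals all_analysis.
From mathcomp Require Import ring lra.

Set Implicit Arguments.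
Unset Strict Implicit.
Unset Printing Implicit Defensive.

Import Order.TTheory GRing.Theory Num.Theory.
Import numFieldNormedType.Exports.
Local Open Scope classical_set_scope.
Local Open Scope ring_scope.

(* Write t = e^tau.  The integrand is -W(tau, b) / (1 + t b), so the quantity
   to bound is mu * int W / (1 + t b).  As beta(a) - mu / (1 + a) = g is
   integrable, B(a) = mu ln(1 + a) + O(1), i.e. e^(-B(a)) is comparable to
   (1 + a)^(-mu).  Since (1 - b)^(mu - 1) >= 1, the normalisation int W = 1
   forces C(tau) <= e^|g|_1 (1 + t)^mu.  Split [0, 1) at 1/2: for b <= 1/2 the
   factor (1 - b)^(mu - 1) is at most 2 and W / (1 + t b) is bounded by
   C (1 + t b)^(-mu - 1), whose integral is at most 1 / (mu t); for b > 1/2,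
   1 / (1 + t b) <= 2 / t and int W = 1.  Hence the quantity is O((C + 1) / t)
   = O(t^(mu - 1)). *)

Section antiderivatives.
Context {R : realType}.
Local Notation leb := (@lebesgue_measure R).

Lemma Rintegral_itv_cc_is_derive (f F : R -> R) (a b : R) : a < b ->
  {in `[a, b], forall x : R, derivable f x 1} ->
  {in `[a, b], forall x : R, is_derive x 1 F (f x)} ->
  \int[leb]_(x in `[a, b]) f x = F b - F a.
Proof.
move=> ab df dF; rewrite /Rintegral (continuous_FTC2 (F := F)) //=.
- exact: derivable_within_continuous.
- have cF x : x \in `[a, b] -> {for x, continuous F}.
    by move=> /dF [dFx _]; apply/differentiable_continuous/derivable1_diffP.
  have [aab bab] : a \in `[a, b] /\ b \in `[a, b].
    by split; rewrite in_itv /= lexx (ltW ab).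
  split.
  + by move=> x /subset_itv_oo_cc /dF [].
  + exact/cvg_at_right_filter/cF.
  + exact/cvg_at_left_filter/cF.
- by move=> x /subset_itv_oo_cc /dF dFx; rewrite derive1E derive_val.
Qed.

Lemma is_derive_affine (c t x : R) : is_derive x 1 (fun b : R => c + t * b) t.
Proof.
apply: is_derive_eq
  (@is_deriveD _ R^o R^o (cst c) ( *%R t) x 1 0 (t * 1) _ _) _.
by rewrite add0r mulr1.
Qed.

Lemma is_derive_powR_affine (t p x : R) : 0 < 1 + t * x ->
  is_derive x 1 (fun b : R => (1 + t * b) `^ p)
    (p * (1 + t * x) `^ (p - 1) * t).
Proof.
move=> tx0.
have h := @is_derive1_comp _ (fun z : R => z `^ p) (fun b => 1 + t * b) x _ _
  (is_derive1_powR p tx0) (is_derive_affine 1 t x).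
exact: h.
Qed.

Lemma is_derive_ln_1p (x : R) : 0 < 1 + x ->
  is_derive x 1 (fun a : R => ln (1 + a)) (1 + x)^-1.
Proof.
move=> x0; have -> : (fun a => ln (1 + a)) = (@ln R) \o (fun a => 1 + 1 * a).
  by apply/funext => a; rewrite /= mul1r.
have x0' : 0 < 1 + 1 * x by rewrite mul1r.
have h := @is_derive1_comp _ (@ln R) (fun a => 1 + 1 * a) x _ _
  (is_derive1_ln x0') (is_derive_affine 1 1 x).
by rewrite mul1r mulr1 in h; exact: h.
Qed.

Lemma derivable_inv_1p (m x : R) : 0 <= x ->
  derivable (fun a : R => m / (1 + a)) x 1.
Proof.
move=> x0; apply: derivableM; first exact: derivable_cst.
apply: derivableV; first by rewrite gt_eqF // ltr_pwDl.
exact/derivableD/derivable_id/derivable_cst.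
Qed.

Lemma integrable_inv_1p (m x : R) :
  leb.-integrable `[0, x] (EFin \o (fun a => m / (1 + a))).
Proof.
apply: continuous_compact_integrable; first exact: segment_compact.
apply: derivable_within_continuous => y; rewrite in_itv /= => /andP[y0 _].
exact: derivable_inv_1p.
Qed.

Lemma Rintegral_inv_1p (m x : R) : 0 <= x ->
  \int[leb]_(a in `[0, x]) (m / (1 + a)) = m * ln (1 + x).
Proof.
rewrite le_eqVlt => /predU1P[<-|x0].
  by rewrite set_itv1 Rintegral_set1 addr0 ln1 mulr0.
rewrite (Rintegral_itv_cc_is_derive (F := fun a => m * ln (1 + a))) //.
- by rewrite addr0 ln1 mulr0 subr0.
- by move=> y; rewrite in_itv /= => /andP[y0 _]; exact: derivable_inv_1p.
move=> y; rewrite in_itv /= => /andP[y0 _].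
exact/is_deriveZ/is_derive_ln_1p/ltr_pwDl.
Qed.

Lemma Rintegral_powR_affine (t m : R) : 0 < t -> 0 < m ->
  \int[leb]_(b in `[0, 1]) ((1 + t * b) `^ (- m - 1)) =
  (1 - (1 + t) `^ (- m)) / (m * t).
Proof.
move=> t0 m0; have tb0 b : b \in `[0, 1] -> 0 < 1 + t * b.
  by rewrite in_itv /= => /andP[b0 _]; rewrite ltr_pwDl // mulr_ge0 // ltW.
rewrite (Rintegral_itv_cc_is_derive
  (F := fun b => - (m * t)^-1 * (1 + t * b) `^ (- m))) //.
- by rewrite mulr0 addr0 mulr1 powR1; field; rewrite !gt_eqF.
- by move=> b /tb0 /(is_derive_powR_affine (- m - 1)) [].
move=> b /tb0 /(is_derive_powR_affine (- m)) /(is_deriveZ (- (m * t)^-1)) h.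
suff -> : (1 + t * b) `^ (- m - 1) =
    - (m * t)^-1 * (- m * (1 + t * b) `^ (- m - 1) * t) by exact: h.
by field; rewrite !gt_eqF.
Qed.

Lemma integrable_powR_affine (t p : R) : 0 <= t ->
  leb.-integrable `[0, 1] (EFin \o (fun b => (1 + t * b) `^ p)).
Proof.
move=> t0; apply: continuous_compact_integrable; first exact: segment_compact.
apply: derivable_within_continuous => b; rewrite in_itv /= => /andP[b0 _].
by case: (@is_derive_powR_affine t p b (ltr_pwDl ltr01 (mulr_ge0 t0 b0))).
Qed.

Lemma Rintegral_powR_affine_le (t m : R) : 0 < t -> 0 < m ->
  \int[leb]_(b in `[0, 1[) ((1 + t * b) `^ (- m - 1)) <= (m * t)^-1.
Proof.
move=> t0 m0; rewrite Rintegral_itv_bndo_bndc ?Rintegral_powR_affine //.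
  by rewrite ler_pdivrMr ?mulr_gt0 // mulVf ?gt_eqF ?mulr_gt0 // gerBl powR_ge0.
apply: integrableS (integrable_powR_affine (- m - 1) (ltW t0)) => //.
by apply: subset_itvl; rewrite bnd_simp.
Qed.

End antiderivatives.

Lemma integrableZl_EFin {R : realType} {i : interval R} (k : R) {f : R -> R} :
  lebesgue_measure.-integrable [set` i] (EFin \o f) ->
  lebesgue_measure.-integrable [set` i] (EFin \o (fun x => k * f x)).
Proof.
move=> fint; have kfint : lebesgue_measure.-integrable [set` i]
    (fun x => k%:E * (EFin \o f) x)%E by exact: integrableZl.
by apply: eq_integrable kfint => // x _; rewrite /= EFinM.
Qed.

Definition normL1 {R : realType} (D : set R) (f : R -> R) : R :=
  fine (\int[lebesgue_measure]_(x in D) `|f x|%:E)%E.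

Lemma integral_normr_fin_num (R : realType) (D : set R) (f : R -> R) :
  measurable D -> lebesgue_measure.-integrable D (EFin \o f) ->
  (\int[lebesgue_measure]_(s in D) `|f s|%:E)%E \is a fin_num.
Proof.
by move=> mD /integrableP[_ fint]; rewrite ge0_fin_numE // integral_ge0.
Qed.

Section primitive_of_beta.
Context {R : realType} {mu : R} {beta g : R -> R}.
Local Notation leb := (@lebesgue_measure R).
Hypothesis beta_split : forall a, 0 <= a -> beta a = mu / (1 + a) + g a.
Hypothesis g_integrable : leb.-integrable `[0, +oo[ (EFin \o g).

Let g_integrable_itv x : leb.-integrable `[0, x] (EFin \o g).
Proof.
by apply: integrableS g_integrable => //; apply: subset_itvl; rewrite bnd_simp.
Qed.

Lemma integrable_beta_itv x : 0 <= x -> leb.-integrable `[0, x] (EFin \o beta).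
Proof.
move=> x0; have int_split : leb.-integrable `[0, x]
    ((EFin \o (fun a => (mu / (1 + a))%R)) \+ (EFin \o g))%E.
  exact/integrableD/g_integrable_itv/integrable_inv_1p.
apply: eq_integrable int_split => //.
by move=> a; rewrite inE /= in_itv /= => /andP[a0 _]; rewrite /= beta_split.
Qed.

Lemma Bfun_ln_dist x : 0 <= x ->
  `|Bfun beta x - mu * ln (1 + x)| <= normL1 `[0, +oo[ g.
Proof.
move=> x0.
have -> : Bfun beta x = \int[leb]_(a in `[0, x]) (mu / (1 + a) + g a).
  apply: eq_Rintegral => a; rewrite inE /= in_itv /= => /andP[a0 _].
  exact: beta_split.
rewrite RintegralD //; last exact: integrable_inv_1p.
rewrite Rintegral_inv_1p // addrC addKr.
apply: le_trans (le_normr_Rintegral _ _) _ => //.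
rewrite /Rintegral /normL1 fine_le ?integral_normr_fin_num //.
apply: ge0_subset_integral => //=; last by apply: subset_itvl; rewrite bnd_simp.
apply/measurable_realfun.measurable_EFinP; apply: measurableT_comp => //.
by case/integrableP: g_integrable => /measurable_realfun.measurable_EFinP.
Qed.

Lemma expR_NBfun_le x : 0 <= x ->
  expR (- Bfun beta x) <= expR (normL1 `[0, +oo[ g) * (1 + x) `^ (- mu).
Proof.
move=> x0; have /ler_normlP[+ _] := Bfun_ln_dist x0.
rewrite -[1 + x]lnK ?posrE ?ltr_pwDl // -expRM -expRD ler_expR expRK; lra.
Qed.

Lemma expR_NBfun_ge x : 0 <= x ->
  expR (- normL1 `[0, +oo[ g) * (1 + x) `^ (- mu) <= expR (- Bfun beta x).
Proof.
move=> x0; have /ler_normlP[_] := Bfun_ln_dist x0.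
rewrite -[1 + x]lnK ?posrE ?ltr_pwDl // -expRM -expRD ler_expR expRK; lra.
Qed.

Hypothesis beta_gt0 : forall a, 0 <= a -> 0 < beta a.

Lemma Bfun_nondecreasing : {homo Bfun beta : x y / x <= y}.
Proof.
move=> x y xy; have [x_lt0|x0] := ltP x 0.
  rewrite /Bfun set_itv_ge -?ltNge ?bnd_simp // Rintegral_set0.
  apply: Rintegral_ge0 => a; rewrite /= in_itv /= => /andP[a0 _].
  exact/ltW/beta_gt0.
have y0 : 0 <= y := le_trans x0 xy.
rewrite /Bfun /Rintegral fine_le ?integrable_fin_num ?integrable_beta_itv //.
apply: ge0_subset_integral => //=; last by apply: subset_itvl; rewrite bnd_simp.
- by case/integrableP: (integrable_beta_itv y0).
- by move=> a; rewrite in_itv /= lee_fin => /andP[a0 _]; exact/ltW/beta_gt0.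
Qed.

End primitive_of_beta.

Lemma powRN_le (R : realType) (a b r : R) :
  0 < a <= b -> 0 <= r -> b `^ (- r) <= a `^ (- r).
Proof.
move=> /andP[a0 ab] r0; have b0 := lt_le_trans a0 ab.
by rewrite !powRN lef_pV2 ?posrE ?powR_gt0 // ge0_ler_powR // nnegrE ltW.
Qed.

Lemma powR_subr1 (R : realType) (a p : R) : 0 < a -> a `^ (p - 1) = a `^ p / a.
Proof. by move=> a0; rewrite /powR gt_eqF // mulrBl expRB mul1r lnK. Qed.

Lemma powR_1pexpR_le (R : realType) (m tau : R) : 0 <= tau -> 0 <= m <= 1 ->
  (1 + expR tau) `^ m <= 2 * expR (m * tau).
Proof.
move=> tau0 /andP[m0 m1]; have t_ge1 : 1 <= expR tau by rewrite -expR0 ler_expR.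
have : 1 + expR tau <= 2 * expR tau by lra.
move=> /(ge0_ler_powR m0).
rewrite !nnegrE addr_ge0 ?expR_ge0 ?mulr_ge0 // => /(_ isT isT).
move/le_trans; apply; rewrite powRM ?expR_ge0 // -expRM [tau * m]mulrC.
by rewrite ler_wpM2r ?expR_ge0 // ler1_powR ?ler1n.
Qed.

Section weight_estimates.
Variables (R : realType) (mu : R) (beta g C : R -> R) (tau : R).
Local Notation leb := (@lebesgue_measure R).
Local Notation W := (Wfun mu beta C tau).
Local Notation t := (expR tau).
Local Notation G := (normL1 `[0, +oo[ g).
Hypotheses (mu_gt0 : 0 < mu) (mu_lt1 : mu < 1) (tau_ge0 : 0 <= tau).
Hypothesis beta_gt0 : forall a, 0 <= a -> 0 < beta a.
Hypothesis beta_split : forall a, 0 <= a -> beta a = mu / (1 + a) + g a.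
Hypothesis g_integrable : leb.-integrable `[0, +oo[ (EFin \o g).
Hypothesis C_gt0 : 0 < C tau.
Hypothesis W_normalized : Rintegral lebesgue_measure `[0, 1[ W = 1.

Let t_gt0 : 0 < t. Proof. exact: expR_gt0. Qed.
Let tb_ge0 b : 0 <= b -> 0 <= t * b.
Proof. by move=> b0; rewrite mulr_ge0 ?expR_ge0. Qed.

Lemma Wfun_ge0 b : 0 <= W b.
Proof. by rewrite /Wfun !mulr_ge0 ?powR_ge0 ?expR_ge0 // ltW. Qed.

Lemma measurable_Wfun : measurable_fun (`[0, 1[ : set R) W.
Proof.
have B_nd := Bfun_nondecreasing beta_split g_integrable beta_gt0.
apply: measurable_realfun.measurable_funM; last first.
  apply: (measurableT_comp (@measurable_realfun.measurable_powR R (mu - 1))).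
  exact: measurable_realfun.measurable_funB.
apply: measurable_realfun.measurable_funM => //.
apply: (measurableT_comp (@measurable_realfun.measurable_expR R)).
apply: measurable_realfun.measurable_funN.
apply: measurable_realfun.nondecreasing_measurable => // x y xy.
by apply/B_nd; rewrite ler_wpM2l ?expR_ge0.
Qed.

Lemma integrable_Wfun : leb.-integrable `[0, 1[ (EFin \o W).
Proof.
apply/integrableP; split.
  by apply/measurable_realfun.measurable_EFinP; exact: measurable_Wfun.
under eq_integral do rewrite /= ger0_norm ?Wfun_ge0 //.
have W_int_ge0 : (0 <= \int[leb]_(b in `[0%R, 1%R[) (W b)%:E)%E.
  by apply: integral_ge0 => b _; rewrite lee_fin Wfun_ge0.
move: W_normalized W_int_ge0; rewrite /Rintegral.
case: (\int[leb]_(b in _) _)%E => [r _ _|/= /eqP|//]; first exact: ltry.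
by rewrite eq_sym oner_eq0.
Qed.

Lemma Wfun_ge b : 0 <= b < 1 -> C tau * expR (- G) * (1 + t) `^ (- mu) <= W b.
Proof.
move=> /andP[b0 b1]; rewrite /Wfun -!mulrA; apply: ler_wpM2l; first exact: ltW.
have pow_ge1 : 1 <= (1 - b) `^ (mu - 1).
  have b01 : 0 < 1 - b <= 1 by rewrite subr_gt0 b1 gerBl.
  by rewrite -[leLHS](powRr0 (1 - b)) (ger_powR b01) // subr_le0 ltW.
apply: le_trans _ (ler_peMr (expR_ge0 _) pow_ge1).
apply: le_trans _ (expR_NBfun_ge beta_split g_integrable (tb_ge0 b0)).
rewrite ler_wpM2l ?expR_ge0 // powRN_le ?(ltW mu_gt0) //.
by rewrite (ltr_pwDl ltr01 (tb_ge0 b0)) lerD2l ger_pMr // ltW.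
Qed.

Lemma normalizer_le : C tau <= expR G * (1 + t) `^ mu.
Proof.
set c := C tau * expR (- G) * (1 + t) `^ (- mu).
have c_int : leb.-integrable `[0, 1[ (EFin \o cst c).
  apply: (@integrableS _ _ _ leb `[0, 1]) => //.
    by apply: subset_itvl; rewrite bnd_simp.
  apply: continuous_compact_integrable; first exact: segment_compact.
  exact/continuous_subspaceT/cst_continuous.
have : \int[leb]_(b in `[0, 1[) c <= \int[leb]_(b in `[0, 1[) W b.
  apply: le_Rintegral => //; first exact: integrable_Wfun.
  by move=> b /=; rewrite in_itv /=; exact: Wfun_ge.
rewrite Rintegral_cst // W_normalized.
have -> : fine (leb `[0, 1[) = 1.
  by rewrite lebesgue_measure_itv /= lte01 /= subr0.
rewrite mulr1 /c expRN powRN -mulrA -invfM.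
by rewrite ler_pdivrMr ?mulr_gt0 ?expR_gt0 ?powR_gt0 ?ltr_pwDl // mul1r.
Qed.

Lemma Wfun_div_le_near0 b : 0 <= b <= 2^-1 ->
  W b / (1 + t * b) <= 2 * C tau * expR G * (1 + t * b) `^ (- mu - 1).
Proof.
move=> /andP[b0 b_le].
have tb_gt0 : 0 < 1 + t * b := ltr_pwDl ltr01 (tb_ge0 b0).
have pow_le2 : (1 - b) `^ (mu - 1) <= 2.
  have b01 : 0 < 1 - b <= 1.
    by rewrite gerBl b0 andbT subr_gt0 (le_lt_trans b_le) ?invf_lt1 ?ltr1n.
  have exp_ge : -1 <= mu - 1 by rewrite lerBrDr addNr ltW.
  apply: le_trans (ger_powR b01 exp_ge) _.
  have b_gt0 : 0 < 1 - b by case/andP: b01.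
  by rewrite powR_inv1 ?(ltW b_gt0) // -[_^-1]mul1r ler_pdivrMr //; lra.
rewrite powR_subr1 // /Wfun.
rewrite [X in _ <= X](_ : _ =
  C tau * (expR G * (1 + t * b) `^ (- mu) * 2) / (1 + t * b)); last by ring.
rewrite ler_wpM2r ?invr_ge0 ?(ltW tb_gt0) // -mulrA ler_wpM2l ?(ltW C_gt0) //.
rewrite ler_pM ?expR_ge0 ?powR_ge0 //.
exact: (expR_NBfun_le beta_split g_integrable (tb_ge0 b0)).
Qed.

Lemma Wfun_div_le b : 0 <= b ->
  W b / (1 + t * b) <=
  2 * C tau * expR G * (1 + t * b) `^ (- mu - 1) + 2 / t * W b.
Proof.
move=> b0; have tb_gt0 : 0 < 1 + t * b := ltr_pwDl ltr01 (tb_ge0 b0).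
have [b_le|b_gt] := leP b 2^-1.
  rewrite (le_trans (Wfun_div_le_near0 _)) ?b0 // lerDl.
  by rewrite mulr_ge0 ?Wfun_ge0 // divr_ge0 // ltW.
apply: ler_wpDl; first by rewrite !mulr_ge0 ?powR_ge0 ?expR_ge0 // ltW.
rewrite mulrC ler_wpM2r ?Wfun_ge0 // -[_^-1]mul1r ler_pdivlMr //.
rewrite mulrAC ler_pdivrMr //; nra.
Qed.

Lemma integrable_Wfun_div :
  leb.-integrable `[0, 1[ (EFin \o (fun b => W b / (1 + t * b))).
Proof.
have inv_meas : measurable_fun (`[0, 1[ : set R) (fun b => (1 + t * b)^-1).
  apply: eq_measurable_fun
    (_ : measurable_fun _ (fun b => (1 + t * b) `^ (-1))).
    move=> b; rewrite inE /= in_itv /= => /andP[b0 _].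
    by rewrite powR_inv1 // addr_ge0 ?tb_ge0.
  apply: (measurableT_comp (@measurable_realfun.measurable_powR R (-1))).
  exact: (@measurable_realfun.measurable_funD _ _ R _ (cst 1) ( *%R t) _
    (measurable_realfun.mulrl_measurable t)).
apply: le_integrable integrable_Wfun => //.
  apply/measurable_realfun.measurable_EFinP.
  exact: measurable_realfun.measurable_funM measurable_Wfun inv_meas.
move=> b; rewrite /= in_itv /= => /andP[b0 _].
rewrite lee_fin !ger0_norm ?Wfun_ge0 ?divr_ge0 ?Wfun_ge0 ?addr_ge0 ?tb_ge0 //.
by rewrite ler_pdivrMr ?ler_peMr ?Wfun_ge0 ?lerDl ?tb_ge0 // ltr_pwDl ?tb_ge0.
Qed.

Lemma Rintegral_Wfun_moment :
  Rintegral lebesgue_measure `[0, 1[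
    (fun b => (t * b / (1 + t * b) - 1) * W b) =
  - \int[leb]_(b in `[0, 1[) (W b / (1 + t * b)).
Proof.
transitivity (\int[leb]_(b in `[0, 1[) (-1 * (W b / (1 + t * b)))).
  apply: eq_Rintegral => b; rewrite inE /= in_itv /= => /andP[b0 _].
  by field; rewrite gt_eqF // ltr_pwDl ?tb_ge0.
by rewrite RintegralZl ?integrable_Wfun_div // mulN1r.
Qed.

Lemma Rintegral_Wfun_div_le :
  mu * \int[leb]_(b in `[0, 1[) (W b / (1 + t * b)) <=
  (2 * C tau * expR G + 2) / t.
Proof.
set K := 2 * C tau * expR G.
have K_ge0 : 0 <= K by rewrite !mulr_ge0 ?expR_ge0 // ltW.
have pow_int :
    leb.-integrable `[0, 1[ (EFin \o (fun b => (1 + t * b) `^ (- mu - 1))).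
  apply: integrableS (integrable_powR_affine (- mu - 1) (ltW t_gt0)) => //.
  by apply: subset_itvl; rewrite bnd_simp.
have Kpow_int := integrableZl_EFin K pow_int.
have Wt_int := integrableZl_EFin (2 / t) integrable_Wfun.
have : \int[leb]_(b in `[0, 1[) (W b / (1 + t * b)) <=
    \int[leb]_(b in `[0, 1[) (K * (1 + t * b) `^ (- mu - 1) + 2 / t * W b).
  apply: le_Rintegral => //; first exact: integrable_Wfun_div.
  apply: eq_integrable (integrableD _ Kpow_int Wt_int) => //.
  by move=> b; rewrite /= in_itv /= => /andP[b0 _]; exact: Wfun_div_le.
have Wt_mass : \int[leb]_(b in `[0, 1[) (2 / t * W b) = 2 / t.
  by rewrite RintegralZl ?integrable_Wfun // W_normalized mulr1.
rewrite RintegralD // Wt_mass RintegralZl // => X_le.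
apply: le_trans (ler_wpM2l (ltW mu_gt0) X_le) _.
rewrite mulrDr mulrCA [leRHS]mulrDl.
apply: lerD; last by rewrite ler_piMl ?divr_ge0 // ltW.
rewrite ler_wpM2l //.
have := ler_wpM2l (ltW mu_gt0) (Rintegral_powR_affine_le t_gt0 mu_gt0).
move/le_trans; apply.
by rewrite invfM mulrA mulfV ?gt_eqF // mul1r.
Qed.

Lemma Wfun_moment_le : mu * \int[leb]_(b in `[0, 1[) (W b / (1 + t * b)) <=
  (4 * expR (2 * G) + 2) * expR (- ((1 - mu) * tau)).
Proof.
apply: le_trans Rintegral_Wfun_div_le _.
have C_le : C tau <= expR G * (2 * expR (mu * tau)).
  apply: le_trans normalizer_le _.
  by rewrite ler_wpM2l ?expR_ge0 // powR_1pexpR_le // ltW //= ltW.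
have shift : expR (mu * tau) / t = expR (- ((1 - mu) * tau)).
  by rewrite -expRB; congr expR; ring.
have t_inv_le : t^-1 <= expR (- ((1 - mu) * tau)).
  by rewrite -expRN ler_expR lerN2 ler_piMl // gerBl ltW.
rewrite mulrDl [leRHS]mulrDl; apply: lerD; last by rewrite ler_wpM2l.
apply: le_trans (_ : 2 * (expR G * (2 * expR (mu * tau))) * expR G / t <= _).
  by rewrite !ler_wpM2r ?invr_ge0 ?expR_ge0 ?(ltW t_gt0) // ler_wpM2l.
by rewrite -shift expRM_natl le_eqVlt; apply/orP; left; apply/eqP; ring.
Qed.

End weight_estimates.

Theorem lemma8 (R : realType) (mu : R) (beta g : R -> R) (K0 alpha : R)
  (C : R -> R)
  (hmu0 : 0 < mu) (hmu1 : mu < 1)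
  (hpos : forall a, 0 <= a -> 0 < beta a)
  (hbdd : exists Mb : R, forall a, 0 <= a -> beta a <= Mb)
  (hdec : forall a b, 0 <= a -> a <= b -> beta b <= beta a)
  (hlim : (fun a => a * beta a) x @[x --> +oo] --> mu)
  (hg : forall a, 0 <= a -> beta a = mu / (1 + a) + g a)
  (hgL1 : lebesgue_measure.-integrable `[0, +oo[ (EFin \o g))
  (hK0 : 0 < K0) (halpha : 0 < alpha)
  (hgtail : forall a, 0 <= a ->
     (\int[lebesgue_measure]_(s in `[a, +oo[) `|g s|%:E <=
        (K0 * (1 + a) `^ (- alpha))%:E)%E)
  (hCpos : forall tau, 0 <= tau -> 0 < C tau)
  (hCnorm : forall tau, 0 <= tau ->
     Rintegral lebesgue_measure `[0, 1[ (Wfun mu beta C tau) = 1) :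
  exists M : R, 0 < M /\ forall tau, 0 <= tau ->
    `| mu * Rintegral lebesgue_measure `[0, 1[
          (fun b => (expR tau * b / (1 + expR tau * b) - 1)
                     * Wfun mu beta C tau b) |
      <= M * expR (- ((1 - mu) * tau)).
Proof.
exists (4 * expR (2 * normL1 `[0, +oo[ g) + 2).
split; first by rewrite addr_gt0 ?mulr_gt0 ?expR_gt0.
move=> tau tau0; have C_gt0 := hCpos _ tau0; have W_norm := hCnorm _ tau0.
rewrite (Rintegral_Wfun_moment (g := g)) // normrM normrN.
rewrite [`|mu|]ger0_norm ?(ltW hmu0) // ger0_norm; first exact: Wfun_moment_le.
apply: Rintegral_ge0 => b; rewrite /= in_itv /= => /andP[b0 _].
by rewrite divr_ge0 ?Wfun_ge0 ?(ltW C_gt0) // addr_ge0 // mulr_ge0 ?expR_ge0.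
Qed.
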